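(* Let $m$ be an odd positive integer with $m\not\equiv 1\pmod 8$, and let $\ell=\lceil\log_2 m\rceil$. Then $\mathfrak K(m)<\left(1+\frac{37}{m}\right)2^\ell$.
   Context: The Thue–Morse word is $\mathbf t=\mathbf t_1\mathbf t_2\cdots$ where $\mathbf t_i\in\{0,1\}$ has the parity of the number of $1$'s in the binary expansion of $i-1$. For positive integers $\alpha\le\beta$, $\langle\alpha,\beta\rangle=\mathbf t_\alpha\cdots\mathbf t_\beta$. A $k$-anti-power is a word $w_1\cdots w_k$ with $w_1,\dots,w_k$ pairwise distinct words of equal length. For a positive integer $m$, $\mathfrak K(m)$ is the smallest positive integer $k$ such that the prefix $\langle 1,km\rangle$ of $\mathbf t$ is not a $k$-anti-power. *)

From mathcomp Require Import all_boot.
Set Implicit Arguments. Unset Strict Implicit. Unset Printing Implicit Defensive.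

Fixpoint popcount_aux (fuel n : nat) : nat :=
  match fuel with
  | 0 => 0
  | f.+1 => if n == 0 then 0 else odd n + popcount_aux f n./2
  end.
Definition popcount (n : nat) : nat := popcount_aux n n.

(* Thue--Morse word, 1-indexed: t_i = parity of popcount (i-1) *)
Definition tm (i : nat) : bool := odd (popcount i.-1).

(* <alpha, beta> = t_alpha ... t_beta (for 1 <= alpha <= beta) *)
Definition tm_factor (alpha beta : nat) : seq bool :=
  mkseq (fun j => tm (alpha + j)) (beta.+1 - alpha).

(* the j-th block (j = 1..k) of length m of the prefix <1, k m> *)
Definition tm_block (m j : nat) : seq bool := tm_factor ((j.-1) * m).+1 (j * m).

Definition prefix_is_anti_power (k m : nat) : Prop :=
  forall i j, 1 <= i <= k -> 1 <= j <= k -> i != j -> tm_block m i != tm_block m j.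

Definition is_frakK (m k : nat) : Prop :=
  0 < k /\ ~ prefix_is_anti_power k m /\
  (forall k', 0 < k' < k -> prefix_is_anti_power k' m).

From mathcomp Require Import all_boot zify.
Set Implicit Arguments. Unset Strict Implicit. Unset Printing Implicit Defensive.

(* Write [tm0] for the Thue--Morse word indexed from 0, so that
   [tm0 (q 2^e + r) = tm0 q (+) tm0 r] for [r < 2^e].  If [tm0 (y + m) = tm0 y] for every
   quotient [y] by [2^e] of a position in block [n + 1], then blocks [n + 1] and
   [n + 1 + 2^e] coincide, so K(m) <= n + 1 + 2^e; it suffices to find such a window with
   [(n + 1 + 2^e) m < (m + 37) 2^l].
   For [m > 128] write [m = 128 v + d]: for small [y], [tm0 (y + m)] only depends on [d],
   [tm0 v] and [tm0 (v + 1)], while the window only depends on [n] and on the ratio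
   [m / 2^l], which lies in (1/2, 1].  For each admissible residue [d] and each value of
   [(tm0 v, tm0 (v + 1))], a reflexive computation covers (1/2, 1] by Stern--Brocot
   intervals on each of which a single window works.  The moduli [m < 128] are checked
   directly. *)

Definition tm0 n := odd (popcount n).

Lemma popcount_aux_fuel f g n :
  n <= f -> n <= g -> popcount_aux f n = popcount_aux g n.
Proof.
elim: f g n => [|f IH] [|g] n /=.
- by rewrite leqn0 => /eqP ->.
- by rewrite leqn0 => /eqP -> _.
- by rewrite leqn0 => _ /eqP ->.
case: (eqVneq n 0) => [->//|n_neq0] nf ng.
by congr (_ + _); apply: IH; lia.
Qed.

Lemma popcountE n : popcount n = odd n + popcount n./2.
Proof.
rewrite /popcount; case: n => [//|n] /=.
by congr (_ + _); apply: popcount_aux_fuel; lia.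
Qed.

Lemma tm0_half n : tm0 n = odd n (+) tm0 n./2.
Proof. by rewrite /tm0 popcountE oddD oddb. Qed.

Lemma tm0_mulD k a b : b < 2 ^ k -> tm0 (a * 2 ^ k + b) = tm0 a (+) tm0 b.
Proof.
elim: k a b => [|k IH] a b.
  by rewrite expn0 ltnS leqn0 muln1 => /eqP ->; rewrite addn0 /tm0 addbF.
move=> b_lt.
have -> : a * 2 ^ k.+1 + b = odd b + (a * 2 ^ k + b./2).*2.
  by rewrite expnS; have := odd_double_half b; lia.
rewrite tm0_half half_bit_double oddD odd_double addbF IH; last first.
  by rewrite ltn_half_double -mul2n -expnS.
by rewrite [tm0 b]tm0_half oddb addbCA.
Qed.

Lemma tm_blockE m j :
  0 < j -> tm_block m j = mkseq (fun i => tm0 (j.-1 * m + i)) m.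
Proof.
move=> j_gt0; rewrite /tm_block /tm_factor.
have -> : (j * m).+1 - (j.-1 * m).+1 = m by case: j j_gt0 => // j _; rewrite mulSn; lia.
by apply: eq_mkseq => i; rewrite /tm addSn.
Qed.

Definition shift_invariant_window m e n :=
  forall y, n * m %/ 2 ^ e <= y <= (n * m + m.-1) %/ 2 ^ e -> tm0 (y + m) = tm0 y.

(* Position [n m + i] is [q 2^e + r] with [r < 2^e]; moving [2^e] blocks further
   replaces [q] by [q + m], and [q] ranges over the window. *)
Lemma tm_block_shift m e n :
  0 < m -> shift_invariant_window m e n -> tm_block m n.+1 = tm_block m (n.+1 + 2 ^ e).
Proof.
move=> m_gt0 inv; rewrite !tm_blockE ?addSn //=.
apply: (@eq_from_nth _ false); rewrite !size_mkseq // => i lt_im.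
rewrite !nth_mkseq //; set x := n * m + i.
have pow_gt0 : 0 < 2 ^ e by rewrite expn_gt0.
have x_eq : x = x %/ 2 ^ e * 2 ^ e + x %% 2 ^ e by rewrite -divn_eq.
have -> : (n + 2 ^ e) * m + i = (x %/ 2 ^ e + m) * 2 ^ e + x %% 2 ^ e.
  rewrite mulnDl addnAC -/x {1}x_eq mulnDl [_ * m]mulnC.
  by rewrite addnAC.
rewrite tm0_mulD ?ltn_pmod // {1}x_eq tm0_mulD ?ltn_pmod // inv //.
by apply/andP; split; apply: leq_div2r; rewrite /x; lia.
Qed.

Definition repeated_block m k := [exists i : 'I_k.+1, exists j : 'I_k.+1,
  [&& 0 < i, i < j & tm_block m i == tm_block m j]].

Lemma anti_powerP m k : prefix_is_anti_power k m <-> ~~ repeated_block m k.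
Proof.
split=> [anti | norep i j /andP [i_gt0 ik] /andP [j_gt0 jk] ij].
  apply/existsP => -[i /existsP [j /and3P [i_gt0 ij /eqP eq_ij]]].
  have := anti i j; rewrite i_gt0 (ltn_trans i_gt0 ij) !leq_ord neq_ltn ij eq_ij.
  by rewrite eqxx => /(_ isT isT isT).
wlog lt_ij : i j i_gt0 j_gt0 ik jk {ij} / i < j.
  move=> wlog_lt; case: (ltngtP i j) ij => // [lt_ij | lt_ji] _; first exact: wlog_lt.
  by rewrite eq_sym; apply: wlog_lt.
apply/negP => /eqP eq_ij; apply: (negP norep); apply/existsP.
exists (Ordinal (ik : i < k.+1)); apply/existsP; exists (Ordinal (jk : j < k.+1)).
by rewrite /= i_gt0 lt_ij eq_ij eqxx.
Qed.

Lemma repeated_block_eq m i j :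
  0 < i < j -> tm_block m i = tm_block m j -> repeated_block m j.
Proof.
move=> /andP [i_gt0 lt_ij] eq_ij; apply/existsP; exists (Ordinal (ltnW lt_ij : i < j.+1)).
by apply/existsP; exists (Ordinal (ltnSn j)); rewrite /= i_gt0 lt_ij eq_ij eqxx.
Qed.

Lemma is_frakK_le m k : repeated_block m k -> exists2 k', is_frakK m k' & k' <= k.
Proof.
move=> rep; have [k' rep' min_k'] := ex_minnP (ex_intro _ k rep).
exists k'; last exact: min_k'.
split; [|split].
- by case: k' rep' {min_k'} => // /existsP [[[|i] ?] /existsP [j]].
- by move/anti_powerP; rewrite rep'.
- move=> k'' /andP [_ lt_k'']; apply/anti_powerP; apply/negP => /min_k'.
  by rewrite leqNgt lt_k''.
Qed.

Definition short_repeat m := exists e n,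
  (n.+1 + 2 ^ e) * m < (m + 37) * 2 ^ up_log 2 m /\ shift_invariant_window m e n.

Lemma frakK_bound_of_short_repeat m : 0 < m -> short_repeat m ->
  exists k, is_frakK m k /\ k * m < (m + 37) * 2 ^ up_log 2 m.
Proof.
move=> m_gt0 [e [n [bound inv]]].
have lt_n : 0 < n.+1 < n.+1 + 2 ^ e by rewrite /= -{1}[n.+1]addn0 ltn_add2l expn_gt0.
have [k frakK_k le_k] := is_frakK_le (repeated_block_eq lt_n (tm_block_shift m_gt0 inv)).
by exists k; split => //; apply: leq_ltn_trans bound; rewrite leq_mul2r le_k orbT.
Qed.

Lemma leq_div_cross a b c d : 0 < c -> 0 < d -> a * d <= b * c -> a %/ c <= b %/ d.
Proof.
move=> c_gt0 d_gt0 ad_le; rewrite leq_divRL // -(leq_pmul2r c_gt0).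
apply: leq_trans ad_le; rewrite mulnAC leq_mul2r.
by rewrite leq_divM orbT.
Qed.

Lemma leq_pred_div_cross a b c d : 0 < a -> 0 < c -> 0 < d -> a * d <= b * c ->
  a.-1 %/ c <= b.-1 %/ d.
Proof.
move=> a_gt0 c_gt0 d_gt0 ad_le; rewrite leq_divRL //.
have q_le : a.-1 %/ c * c <= a.-1 by rewrite leq_divM.
have : a.-1 %/ c * d * c < b * c.
  by rewrite mulnAC; apply: leq_trans ad_le; rewrite ltn_pmul2r //; lia.
by rewrite ltn_pmul2r //; lia.
Qed.

(* [vm_compute] is call-by-value: conditions that usually fail early are written with
   [if] rather than [&&] or [||], so that the rest is not evaluated. *)
Fixpoint all_iota (P : pred nat) lo len : bool :=
  if len is k.+1 then (if P lo then all_iota P lo.+1 k else false) else true.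

Definition all_between lo hi (P : pred nat) := all_iota P lo (hi.+1 - lo).

Lemma all_iotaP P lo len : all_iota P lo len -> forall y, lo <= y < lo + len -> P y.
Proof.
elim: len lo => [|len IH] lo /=; first by move=> _ y; rewrite addn0 ltnNge andbN.
case: ifP => // P_lo rest y /andP [lo_le y_lt].
case: (ltngtP lo y) lo_le => // [lo_lt | <- //] _.
by apply: (IH lo.+1 rest); rewrite lo_lt addSnnS.
Qed.

Lemma all_betweenP lo hi P : all_between lo hi P -> forall y, lo <= y <= hi -> P y.
Proof. by move=> /all_iotaP all_P y /andP [lo_le le_hi]; apply: all_P; lia. Qed.

Definition short_repeat_witness m e n : bool :=
  if all_between (n * m %/ 2 ^ e) ((n * m + m.-1) %/ 2 ^ e) (fun y => tm0 (y + m) == tm0 y)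
  then (n.+1 + 2 ^ e) * m < (m + 37) * 2 ^ up_log 2 m else false.

Lemma short_repeat_witnessP m e n : short_repeat_witness m e n -> short_repeat m.
Proof.
rewrite /short_repeat_witness; case: ifP => // /all_betweenP inv bound.
by exists e, n; split=> // y /inv /eqP.
Qed.

Lemma small_moduli_witnessed :
  all (fun m => has (fun e => has (short_repeat_witness m e) (iota 0 42)) (rev (iota 0 8)))
    [seq m <- iota 2 126 | odd m && (m %% 8 != 1)].
Proof. by vm_compute. Qed.

Lemma short_repeat_small m : 1 < m < 128 -> odd m -> m %% 8 != 1 -> short_repeat m.
Proof.
move=> m_range m_odd m_mod.
have m_in : m \in [seq m <- iota 2 126 | odd m && (m %% 8 != 1)].
  by rewrite mem_filter m_odd m_mod mem_iota; lia.
have /hasP [e _ /hasP [n _ /short_repeat_witnessP //]] := allP small_moduli_witnessed m m_in.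
Qed.

(* The value of [tm0 (v * B + z)] for [z < 2 B], given [b0 = tm0 v] and [b1 = tm0 v.+1]. *)
Definition tm0_offset B z (b0 b1 : bool) : option bool :=
  if z < B then Some (b0 (+) tm0 z)
  else if z < B.*2 then Some (b1 (+) tm0 (z - B)) else None.

Lemma tm0_offsetP k v z b :
  tm0_offset (2 ^ k) z (tm0 v) (tm0 v.+1) = Some b -> tm0 (v * 2 ^ k + z) = b.
Proof.
rewrite /tm0_offset; case: ifP => [z_lt [<-] | /negbT z_ge]; first by rewrite tm0_mulD.
case: ifP => // z_lt [<-].
have -> : v * 2 ^ k + z = v.+1 * 2 ^ k + (z - 2 ^ k) by rewrite mulSn; lia.
by rewrite tm0_mulD //; lia.
Qed.

(* For [m = 128 v + d], [b0 = tm0 v] and [b1 = tm0 v.+1], this decides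
   [tm0 (y + m) = tm0 y]. *)
Definition shift_ok d b0 b1 y := tm0_offset 128 (d + y) b0 b1 == Some (tm0 y).

(* Likewise for [tm0 (x + m + m) = tm0 (x + m)]. *)
Definition double_shift_ok d b0 b1 x :=
  if tm0_offset 128 (d + x) b0 b1 is Some u
  then tm0_offset 256 (d.*2 + x) b0 b1 == Some u else false.

(* For [p1/q1 <= m/2^l <= p2/q2], the three disjuncts give a [short_repeat m] with
   [e = l] and index [n], with [e = l - 1] and index [2^(l-1) + n], and with [e = l - 1]
   and index [n], respectively. *)
Definition leaf_ok d b0 b1 p1 q1 p2 q2 n := [||
  (n.+1 * p2 < 37 * q2) &&
    all_between (n * p1 %/ q1) ((n.+1 * p2).-1 %/ q2) (shift_ok d b0 b1),
  (n.+1 * p2 < 37 * q2) &&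
    all_between (n.*2 * p1 %/ q1) ((n.+1.*2 * p2).-1 %/ q2) (double_shift_ok d b0 b1) |
  (n < 127) && all_between (n.*2 * p1 %/ q1) ((n.+1.*2 * p2).-1 %/ q2) (shift_ok d b0 b1)].

Fixpoint covered d b0 b1 fuel p1 q1 p2 q2 : bool :=
  if has (leaf_ok d b0 b1 p1 q1 p2 q2) (iota 0 64) then true
  else if fuel is f.+1 then
    covered d b0 b1 f p1 q1 (p1 + p2) (q1 + q2) && covered d b0 b1 f (p1 + p2) (q1 + q2) p2 q2
  else false.

Section LargeModulus.

Variables m v d : nat.
Hypothesis m_eq : m = v * 128 + d.
Hypothesis two_pow_ge : 256 <= 2 ^ up_log 2 m.

Local Notation L := (2 ^ up_log 2 m).
Local Notation P := (2 ^ (up_log 2 m).-1).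

Lemma L_gt0 : 0 < L.
Proof. exact: expn_gt0. Qed.

Lemma L_double : L = P.*2.
Proof.
have l_gt0 : 0 < up_log 2 m by case: (up_log 2 m) two_pow_ge.
by rewrite -mul2n -expnS prednK.
Qed.

Lemma mul2_P : 2 * P = L.
Proof. by rewrite mul2n L_double. Qed.

Lemma m_gt0 : 0 < m.
Proof. by case: m two_pow_ge => //; rewrite up_log0. Qed.

Lemma tm0_add_m y : shift_ok d (tm0 v) (tm0 v.+1) y -> tm0 (y + m) = tm0 y.
Proof. by move=> /eqP /(@tm0_offsetP 7) <-; congr tm0; rewrite m_eq; lia. Qed.

Lemma tm0_add_double_m x :
  double_shift_ok d (tm0 v) (tm0 v.+1) x -> tm0 (x + m + m) = tm0 (x + m).
Proof.
rewrite /double_shift_ok; case E: tm0_offset => [u|] // /eqP /(@tm0_offsetP 8) E2.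
move/(@tm0_offsetP 7): E => E1.
have -> : x + m + m = v * 2 ^ 8 + (d.*2 + x) by rewrite m_eq; lia.
have -> : x + m = v * 2 ^ 7 + (d + x) by rewrite m_eq; lia.
by rewrite E1 E2.
Qed.

Section Interval.

Variables p1 q1 p2 q2 : nat.
Hypotheses (q1_gt0 : 0 < q1) (q2_gt0 : 0 < q2).
Hypotheses (ratio_ge : p1 * L <= m * q1) (ratio_le : m * q2 <= p2 * L).

Lemma window_scaled c n S : 0 < S -> c * S = L -> forall y,
  n * m %/ S <= y <= (n * m + m.-1) %/ S ->
  c * n * p1 %/ q1 <= y <= (c * n.+1 * p2).-1 %/ q2.
Proof.
move=> S_gt0 cS y /andP [lo_le le_hi]; apply/andP; split.
  apply: leq_trans lo_le; apply: leq_div_cross => //.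
  by have := leq_mul (leqnn n) ratio_ge; rewrite -cS; lia.
apply: leq_trans le_hi _; have m_pos := m_gt0.
rewrite (_ : n * m + m.-1 = (n.+1 * m).-1); last by rewrite mulSn; lia.
apply: leq_pred_div_cross; rewrite ?muln_gt0 //.
by have := leq_mul (leqnn n.+1) ratio_le; rewrite -cS; lia.
Qed.

Lemma index_bound n : n.+1 * p2 < 37 * q2 -> n.+1 * m < 37 * L.
Proof.
move=> small; rewrite -(ltn_pmul2r q2_gt0).
have := leq_mul (leqnn n.+1) ratio_le.
have : n.+1 * p2 * L < 37 * q2 * L by rewrite ltn_pmul2r ?L_gt0.
lia.
Qed.

Lemma shift_leaf_sound n : n.+1 * p2 < 37 * q2 ->
  all_between (n * p1 %/ q1) ((n.+1 * p2).-1 %/ q2) (shift_ok d (tm0 v) (tm0 v.+1)) ->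
  short_repeat m.
Proof.
move=> /index_bound small /all_betweenP win; exists (up_log 2 m), n; split.
  by rewrite mulnDl; lia.
move=> y /(@window_scaled 1 n L L_gt0 (mul1n _)); rewrite !mul1n.
by move=> /win /tm0_add_m.
Qed.

(* With [e = l - 1], the window of index [P + n] is that of index [n] translated by [m]. *)
Lemma double_leaf_sound n : n.+1 * p2 < 37 * q2 ->
  all_between (n.*2 * p1 %/ q1) ((n.+1.*2 * p2).-1 %/ q2)
    (double_shift_ok d (tm0 v) (tm0 v.+1)) ->
  short_repeat m.
Proof.
move=> /index_bound small /all_betweenP win; exists (up_log 2 m).-1, (P + n); split.
  by move: small; rewrite L_double; lia.
have P_gt0 : 0 < P by rewrite expn_gt0.
move=> y; rewrite mulnDl (mulnC P m) -addnA !divnMDl // => /andP [lo_le le_hi].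
have y_eq : y = y - m + m by rewrite subnK // (leq_trans (leq_addr _ _) lo_le).
have x_win : n * m %/ P <= y - m <= (n * m + m.-1) %/ P by lia.
have := window_scaled P_gt0 mul2_P x_win.
by rewrite !mul2n => /win /tm0_add_double_m; rewrite -y_eq.
Qed.

Lemma half_leaf_sound n : n < 127 ->
  all_between (n.*2 * p1 %/ q1) ((n.+1.*2 * p2).-1 %/ q2) (shift_ok d (tm0 v) (tm0 v.+1)) ->
  short_repeat m.
Proof.
move=> n_lt /all_betweenP win; exists (up_log 2 m).-1, n; split.
  have : n.+1 * m <= P * m by rewrite leq_mul2r; move: two_pow_ge; rewrite L_double; lia.
  by move: two_pow_ge m_gt0; rewrite L_double; lia.
have P_gt0 : 0 < P by rewrite expn_gt0.
move=> y /(window_scaled P_gt0 mul2_P).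
by rewrite !mul2n => /win /tm0_add_m.
Qed.

Lemma leaf_sound s : has (leaf_ok d (tm0 v) (tm0 v.+1) p1 q1 p2 q2) s -> short_repeat m.
Proof.
case/hasP=> n _ /or3P [] /andP [bound win];
  [exact: shift_leaf_sound win | exact: double_leaf_sound win | exact: half_leaf_sound win].
Qed.

End Interval.

Lemma covered_sound {fuel p1 q1 p2 q2} : 0 < q1 -> 0 < q2 ->
  p1 * L <= m * q1 -> m * q2 <= p2 * L ->
  covered d (tm0 v) (tm0 v.+1) fuel p1 q1 p2 q2 -> short_repeat m.
Proof.
elim: fuel p1 q1 p2 q2 => [|fuel IH] p1 q1 p2 q2 q1_gt0 q2_gt0 ratio_ge ratio_le;
  cbn [covered]; case: ifP => [found _ | _ //];
  [exact: leaf_sound found | exact: leaf_sound found |].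
move=> /andP [cov_lo cov_hi]; have q_gt0 : 0 < q1 + q2 by rewrite addn_gt0 q1_gt0.
case: (leqP (m * (q1 + q2)) ((p1 + p2) * L)) => mediant.
  exact: (IH p1 q1 (p1 + p2) (q1 + q2)).
exact: (IH (p1 + p2) (q1 + q2) p2 q2 _ _ (ltnW mediant)).
Qed.
End LargeModulus.

Lemma large_moduli_covered :
  all (fun d => all (fun b0 => all (fun b1 => covered d b0 b1 24 1 2 1 1)
    [:: false; true]) [:: false; true]) [seq d <- iota 0 128 | odd d && (d %% 8 != 1)].
Proof. by vm_compute. Qed.

Lemma short_repeat_large m : 128 < m -> odd m -> m %% 8 != 1 -> short_repeat m.
Proof.
move=> m_gt m_odd m_mod; have m_eq := divn_eq m 128.
set v := m %/ 128 in m_eq; set d := m %% 128 in m_eq.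
have d_odd : odd d by move: m_odd; rewrite {1}m_eq oddD oddM /= andbF.
have d_mod : d %% 8 != 1 by rewrite /d modn_dvdm.
have d_in : d \in [seq d <- iota 0 128 | odd d && (d %% 8 != 1)].
  by rewrite mem_filter d_odd d_mod mem_iota ltn_mod.
have L_ge : 256 <= 2 ^ up_log 2 m.
  by rewrite -[256]/(2 ^ 8) leq_exp2l //; exact: (leq_up_log 2 m_gt).
have b_in (b : bool) : b \in [:: false; true] by case: b.
have /allP /(_ _ (b_in (tm0 v))) /allP /(_ _ (b_in (tm0 v.+1))) cov :=
  allP large_moduli_covered d d_in.
apply: (covered_sound m_eq L_ge _ _ _ _ cov) => //.
  have := up_log_gtn (isT : 1 < 2) (ltn_trans (isT : 1 < 128) m_gt).
  by rewrite (L_double L_ge); lia.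
by rewrite mul1n muln1 up_logP.
Qed.

Theorem lemma5 (m : nat) :
  odd m -> m %% 8 != 1 ->
  exists k, is_frakK m k /\ k * m < (m + 37) * 2 ^ up_log 2 m.
Proof.
move=> m_odd m_mod; have m_gt1 : 1 < m by case: m m_odd m_mod => [|[|m]].
apply: frakK_bound_of_short_repeat; first exact: ltnW.
have [m_lt | m_ge] := ltnP m 128; first by apply: short_repeat_small; rewrite ?m_gt1.
apply: short_repeat_large => //; rewrite ltn_neqAle m_ge andbT.
by apply: contraTneq m_odd => <-.
Qed.
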